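(* Let $F$ be a monotonic neighborhood frame. There exists a neighborhood frame $G$ with $\mathrm{Th}_{L_=}(G)=\mathrm{Th}_{L_=}(F)$ such that there is a surjective bounded morphism $f:G\to\mathrm{ue}\,F$. Moreover, if $\mathcal K_0$ is either the class of monotonic neighborhood frames or the class of quasi-filter neighborhood frames, and $F\in\mathcal K_0$, then $G$ can be taken in $\mathcal K_0$.
   Context: A neighborhood frame is a pair $F=(F,N^F)$ with $N^F: F\to\mathscr P(\mathscr P(F))$. It is monotonic if each $N^F(w)$ is closed under supersets; quasi-filter if it is monotonic and each $N^F(w)$ is closed under intersections of nonempty finite families. $L_=$ is the least set of formulas containing equality atoms and closed under Boolean combinations, existential quantification, and formation of $x\,\Box_y\,\phi$ ($y$ bound). Satisfaction: as in first-order logic, with $F\models w\,\Box_y\,\phi(y)$ iff $\{v\in F: F\models\phi(v)\}\in N^F(w)$. $\mathrm{Th}_{L_=}(F)$ is the set of $L_=$-sentences true in $F$. A map $f:F\to F'$ is a bounded morphism if for all $w\in F$, $U'\subseteq F'$: $f^{-1}(U')\in N^F(w)\iff U'\in N^{F'}(f(w))$. For a monotonic frame $F$, $F^+=(\mathscr P(F),\Box^F)$ with $\Box^F(X)=\{w: X\in N^F(w)\}$. For a Boolean algebra with monotone operator $(A,\Box)$, $\mathrm{Uf}(A)$ is its set of ultrafilters, $[a]=\{u: a\in u\}$, and closed sets are intersections of sets $[a]$. The ultrafilter frame $\mathrm{Uf}(A)$ has $U\in N^\sigma(u)$ iff there is a closed $K\subseteq U$ such that $[a]\supseteq K$ implies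 $\Box(a)\in u$ for all $a\in A$. The ultrafilter extension is $\mathrm{ue}\,F=\mathrm{Uf}(F^+)$. *)

From Stdlib Require Import Arith.

Record nframe := NFrame {
  carrier :> Type;
  nbhd : carrier -> (carrier -> Prop) -> Prop
}.

Definition monotonic (F : nframe) : Prop :=
  forall (w : F) (X Y : F -> Prop),
    nbhd F w X -> (forall v, X v -> Y v) -> nbhd F w Y.

(* closure under intersections of nonempty finite families
   = closure under binary intersections *)
Definition quasi_filter (F : nframe) : Prop :=
  monotonic F /\
  forall (w : F) (X Y : F -> Prop),
    nbhd F w X -> nbhd F w Y -> nbhd F w (fun v => X v /\ Y v).

Inductive form : Type :=
| fEq  : nat -> nat -> form
| fNeg : form -> form
| fAnd : form -> form -> form
| fEx  : nat -> form -> form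
| fBox : nat -> nat -> form -> form.    (* x Box_y phi, y bound *)

Definition upd {T : Type} (rho : nat -> T) (y : nat) (v : T) : nat -> T :=
  fun z => if Nat.eqb z y then v else rho z.

Fixpoint sat (F : nframe) (rho : nat -> F) (phi : form) : Prop :=
  match phi with
  | fEq x y => rho x = rho y
  | fNeg p => ~ sat F rho p
  | fAnd p q => sat F rho p /\ sat F rho q
  | fEx y p => exists v : F, sat F (upd rho y v) p
  | fBox x y p => nbhd F (rho x) (fun v => sat F (upd rho y v) p)
  end.

Fixpoint free_in (z : nat) (phi : form) : Prop :=
  match phi with
  | fEq x y => z = x \/ z = y
  | fNeg p => free_in z p
  | fAnd p q => free_in z p \/ free_in z q
  | fEx y p => z <> y /\ free_in z p
  | fBox x y p => z = x \/ (z <> y /\ free_in z p)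
  end.

Definition sentence (phi : form) : Prop := forall z, ~ free_in z phi.

Definition models (F : nframe) (phi : form) : Prop :=
  forall rho : nat -> F, sat F rho phi.

Definition same_theory (F G : nframe) : Prop :=
  forall phi, sentence phi -> (models F phi <-> models G phi).

Definition bounded_morphism (F F' : nframe) (f : F -> F') : Prop :=
  forall (w : F) (U' : F' -> Prop),
    nbhd F w (fun v => U' (f v)) <-> nbhd F' (f w) U'.

Definition surjective {A B : Type} (f : A -> B) : Prop :=
  forall b, exists a, f a = b.

Definition is_ultrafilter (T : Type) (u : (T -> Prop) -> Prop) : Prop :=
  ~ u (fun _ => False) /\
  u (fun _ => True) /\
  (forall X Y : T -> Prop, u X -> (forall t, X t -> Y t) -> u Y) /\
  (forall X Y : T -> Prop, u X -> u Y -> u (fun t => X t /\ Y t)) /\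
  (forall X : T -> Prop, u X \/ u (fun t => ~ X t)).

Definition ultrafilter (T : Type) := { u : (T -> Prop) -> Prop | is_ultrafilter T u }.

Definition boxF (F : nframe) (X : F -> Prop) : F -> Prop := fun w => nbhd F w X.

Definition ufset (T : Type) (a : T -> Prop) : ultrafilter T -> Prop :=
  fun u => proj1_sig u a.

(* closed sets of Uf: intersections of families of sets [a] *)
Definition uf_closed (T : Type) (K : ultrafilter T -> Prop) : Prop :=
  exists S : (T -> Prop) -> Prop,
    forall u, K u <-> (forall a, S a -> ufset T a u).

(* ue F = Uf(F^+) *)
Definition ue (F : nframe) : nframe :=
  {| carrier := ultrafilter F;
     nbhd := fun u U =>
       exists K : ultrafilter F -> Prop,
         uf_closed F K /\ (forall v, K v -> U v) /\
         (forall a : F -> Prop,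
            (forall v, K v -> ufset F a v) -> proj1_sig u (boxF F a)) |}.

Definition lemma4p4_conclusion (F G : nframe) : Prop :=
  same_theory G F /\
  exists f : G -> ue F, surjective f /\ bounded_morphism G (ue F) f.

From Stdlib Require Import List Arith Lia Setoid Classical ClassicalEpsilon
  FunctionalExtensionality PropExtensionality ProofIrrelevance.
From mathcomp Require filter.

(* The frame G is a limit ultrapower of F.  Fix an ultrafilter D on finite lists
   of subsets of F that contains every cone {i | a \in i}, and iterate it along
   the coordinates of sequences s : nat -> list (F -> Prop).  Points and internal
   sets of G are functions of finitely many coordinates, identified when they
   agree almost surely for the limit of the iterated products; the neighbourhoods
   of a point are generated by internal sets that are almost surely neighbourhoods
   in F.  Los's theorem gives Th(G) = Th(F).  A point v of G is sent to the
   ultrafilter of the sets containing v almost surely.  The key is realisation: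
   a coordinate on which an internal set A does not depend is distributed by D,
   so any ultrafilter u consistent with A is the type of a point of A, chosen at
   each s in A and in the members of u listed by that coordinate.  This gives
   surjectivity and the forth condition; the back condition uses a fresh
   coordinate in the same way, and monotonicity and closure under binary
   intersections pass from F to G through the internal sets. *)

Lemma fine_ultrafilter_exists (A : Type) :
  exists D, is_ultrafilter (list A) D /\ forall a, D (fun i => In a i).
Proof.
  pose (cofinal := fun X : list A -> Prop => exists l, forall i, incl l i -> X i).
  assert (Hcofinal : filter.ProperFilter cofinal).
  { constructor.
    - intros [l Hl]. exact (Hl l (incl_refl l)).
    - constructor.
      + exists nil. intros. exact I.
      + intros X Y [l1 H1] [l2 H2]. exists (l1 ++ l2). intros i Hi.
        destruct (incl_app_inv _ _ Hi). split; auto.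
      + intros X Y HXY [l Hl]. exists l. auto. }
  destruct (filter.ultraFilterLemma Hcofinal) as [D [HD Hsub]].
  exists D. split.
  - split; [|split; [|split; [|split]]].
    + exact (filter.filter_not_empty D).
    + exact (@filter.filterT _ D _).
    + intros X Y HX HXY. exact (@filter.filterS _ D _ X Y HXY HX).
    + intros X Y. exact (@filter.filterI _ D _ X Y).
    + intro X. exact (filter.in_ultra_setVsetC X HD).
  - intro a. apply Hsub. exists (a :: nil). intros i Hi. apply Hi. left. reflexivity.
Qed.

Section UltrafilterFacts.
Context {T : Type} {u : (T -> Prop) -> Prop} (Hu : is_ultrafilter T u).

Lemma uf_true : u (fun _ => True).
Proof. apply Hu. Qed.

Lemma uf_mono {X Y} : u X -> (forall t, X t -> Y t) -> u Y.
Proof. apply Hu. Qed.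

Lemma uf_and {X Y} : u X -> u Y -> u (fun t => X t /\ Y t).
Proof. apply Hu. Qed.

Lemma uf_iff X Y : (forall t, X t <-> Y t) -> (u X <-> u Y).
Proof. intro HXY. split; intro H; apply (uf_mono H); apply HXY. Qed.

Lemma uf_not X : u (fun t => ~ X t) <-> ~ u X.
Proof.
  destruct Hu as (Hproper & _ & _ & _ & Hcompl). split.
  - intros HnX HX. apply Hproper. apply (uf_mono (uf_and HX HnX)). tauto.
  - intro HnX. destruct (Hcompl X); tauto.
Qed.

Lemma uf_const (P : Prop) : u (fun _ => P) <-> P.
Proof.
  split; intro HP.
  - apply NNPP. intro HnP. apply Hu. apply (uf_mono HP). tauto.
  - apply (uf_mono uf_true). auto.
Qed.

Lemma uf_nonempty X : u X -> exists t, X t.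
Proof.
  intro HX. apply NNPP. intro Hno. apply Hu. apply (uf_mono HX).
  intros t Ht. apply Hno. exists t. exact Ht.
Qed.

Lemma uf_meet_list (P : (T -> Prop) -> Prop) l :
  (forall a, In a l -> P a -> u a) -> u (fun t => forall a, In a l -> P a -> a t).
Proof.
  induction l as [|b l IH]; intro Hl.
  - apply (uf_mono uf_true). intros t _ a [].
  - assert (Hrest := IH (fun a Ha => Hl a (or_intror Ha))).
    destruct (classic (P b)) as [Hb|Hb].
    + apply (uf_mono (uf_and (Hl b (or_introl eq_refl) Hb) Hrest)).
      intros t [Hbt Hlt] a [<-|Ha] HPa; [exact Hbt | exact (Hlt a Ha HPa)].
    + apply (uf_mono Hrest).
      intros t Hlt a [<-|Ha] HPa; [destruct (Hb HPa) | exact (Hlt a Ha HPa)].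
Qed.

End UltrafilterFacts.

Lemma ultrafilter_eq (T : Type) (u v : ultrafilter T) :
  (forall a, proj1_sig u a -> proj1_sig v a) -> u = v.
Proof.
  destruct u as [u Hu], v as [v Hv]; simpl. intro Huv.
  assert (E : u = v).
  { apply functional_extensionality. intro a. apply propositional_extensionality.
    split; [apply Huv|]. intro Hva. apply NNPP. intro Hua.
    apply (proj1 (uf_not Hv a) (Huv _ (proj2 (uf_not Hu a) Hua)) Hva). }
  subst v. f_equal. apply proof_irrelevance.
Qed.

Lemma upd_eq (T : Type) (rho : nat -> T) y v : upd rho y v y = v.
Proof. unfold upd. rewrite Nat.eqb_refl. reflexivity. Qed.

Lemma sat_ext (F : nframe) phi : forall rho rho' : nat -> F,
  (forall z, free_in z phi -> rho z = rho' z) -> (sat F rho phi <-> sat F rho' phi).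
Proof.
  induction phi as [x y | p IH | p IHp q IHq | y p IH | x y p IH];
    intros rho rho' Hagree; simpl in *.
  - rewrite (Hagree x), (Hagree y) by auto. reflexivity.
  - rewrite (IH rho rho') by auto. reflexivity.
  - rewrite (IHp rho rho'), (IHq rho rho') by auto. reflexivity.
  - assert (Hupd : forall v, sat F (upd rho y v) p <-> sat F (upd rho' y v) p).
    { intro v. apply IH. intros z Hz. unfold upd.
      destruct (Nat.eqb_spec z y); auto. }
    split; intros [v Hv]; exists v; apply Hupd; exact Hv.
  - rewrite (Hagree x) by auto.
    replace (fun v => sat F (upd rho y v) p) with (fun v => sat F (upd rho' y v) p);
      [reflexivity|].
    apply functional_extensionality. intro v. apply propositional_extensionality.
    symmetry. apply IH. intros z Hz. unfold upd.
    destruct (Nat.eqb_spec z y); auto.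
Qed.

Lemma sentence_sat (F : nframe) phi (rho rho' : nat -> F) :
  sentence phi -> (sat F rho phi <-> sat F rho' phi).
Proof. intro Hphi. apply sat_ext. intros z Hz. destruct (Hphi z Hz). Qed.

Lemma free_vars_bounded (f : nat -> nat) phi :
  exists n, forall z, free_in z phi -> f z <= n.
Proof.
  induction phi as [x y | p IH | p IHp q IHq | y p IH | x y p IH]; simpl.
  - exists (max (f x) (f y)). intros z [-> | ->]; lia.
  - exact IH.
  - destruct IHp as [n Hn], IHq as [m Hm]. exists (max n m).
    intros z [Hz|Hz]; [specialize (Hn z Hz)|specialize (Hm z Hz)]; lia.
  - destruct IH as [n Hn]. exists n. intros z [_ Hz]. auto.
  - destruct IH as [n Hn]. exists (max (f x) n).
    intros z [-> | [_ Hz]]; [|specialize (Hn z Hz)]; lia.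
Qed.

Section IteratedUltrafilter.
Context {I : Type} {i0 : I} {D : (I -> Prop) -> Prop}.

Definition agree (n : nat) (s s' : nat -> I) : Prop := forall k, k < n -> s k = s' k.

Definition finitary (n : nat) (X : (nat -> I) -> Prop) : Prop :=
  forall s s', agree n s s' -> (X s <-> X s').

Definition trunc (n : nat) (s : nat -> I) : nat -> I :=
  fun k => if k <? n then s k else i0.

Lemma agree_le {m n s s'} : m <= n -> agree n s s' -> agree m s s'.
Proof. intros Hmn Hs k Hk. apply Hs. lia. Qed.

Lemma agree_upd n k s i : n <= k -> agree n (upd s k i) s.
Proof. intros Hnk j Hj. unfold upd. destruct (Nat.eqb_spec j k); [lia | reflexivity]. Qed.

Lemma agree_trunc n s : agree n (trunc n s) s.
Proof. intros k Hk. unfold trunc. destruct (Nat.ltb_spec0 k n); [reflexivity | lia]. Qed.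

Lemma trunc_agree {n s s'} : agree n s s' -> trunc n s = trunc n s'.
Proof.
  intro Hs. apply functional_extensionality. intro k. unfold trunc.
  destruct (Nat.ltb_spec0 k n); auto.
Qed.

Lemma finitary_le {m n X} : m <= n -> finitary m X -> finitary n X.
Proof. intros Hmn HX s s' Hs. apply HX. exact (agree_le Hmn Hs). Qed.

(* [iter_uf n] is the product of [n] copies of [D] on the first [n]
   coordinates, the later coordinates being frozen at [i0]. *)
Fixpoint iter_uf (n : nat) (X : (nat -> I) -> Prop) : Prop :=
  match n with
  | 0 => X (fun _ => i0)
  | S m => D (fun i => iter_uf m (fun s => X (upd s m i)))
  end.

(* Only on [finitary] sets is [lim_uf] an ultrafilter. *)
Definition lim_uf (X : (nat -> I) -> Prop) : Prop :=
  exists n, forall m, n <= m -> iter_uf m X.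

Hypothesis D_uf : is_ultrafilter I D.

Lemma iter_uf_ultrafilter n : is_ultrafilter (nat -> I) (iter_uf n).
Proof.
  induction n as [|n IH]; simpl.
  - split; [|split; [|split; [|split]]]; auto.
    intro X. apply classic.
  - split; [|split; [|split; [|split]]].
    + intro H. apply (proj1 (uf_const D_uf False)). apply (uf_mono D_uf H).
      intros i. exact (proj1 (uf_const IH False)).
    + apply (uf_mono D_uf (uf_true D_uf)). intros. exact (uf_true IH).
    + intros X Y HX HXY. apply (uf_mono D_uf HX). intros i Hi.
      apply (uf_mono IH Hi). auto.
    + intros X Y HX HY. apply (uf_mono D_uf (uf_and D_uf HX HY)).
      intros i [HXi HYi]. exact (uf_and IH HXi HYi).
    + intro X. destruct (classic (D (fun i => iter_uf n (fun s => X (upd s n i)))))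
        as [H|H]; [left; exact H | right].
      apply (proj2 (uf_not D_uf _)) in H. apply (uf_mono D_uf H).
      intro i. apply (uf_not IH).
Qed.

Lemma iter_uf_finitary {n m X} : finitary n X -> n <= m -> (iter_uf m X <-> iter_uf n X).
Proof.
  intros HX Hnm. induction Hnm as [|m Hnm IH]; [reflexivity|].
  simpl. rewrite <- IH, <- (uf_const D_uf (iter_uf m X)).
  apply (uf_iff D_uf). intro i. apply (uf_iff (iter_uf_ultrafilter m)).
  intro s. apply HX, agree_upd, Hnm.
Qed.

Lemma lim_uf_mono {X Y} : lim_uf X -> (forall s, X s -> Y s) -> lim_uf Y.
Proof.
  intros [n Hn] HXY. exists n. intros m Hm.
  exact (uf_mono (iter_uf_ultrafilter m) (Hn m Hm) HXY).
Qed.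

Lemma lim_uf_and {X Y} : lim_uf X -> lim_uf Y -> lim_uf (fun s => X s /\ Y s).
Proof.
  intros [n Hn] [n' Hn']. exists (max n n'). intros m Hm.
  apply (uf_and (iter_uf_ultrafilter m)); [apply Hn | apply Hn']; lia.
Qed.

Lemma lim_uf_all X : (forall s, X s) -> lim_uf X.
Proof.
  intro HX. exists 0. intros m _.
  apply (uf_mono (iter_uf_ultrafilter m) (uf_true (iter_uf_ultrafilter m))). auto.
Qed.

Lemma lim_uf_const (P : Prop) : lim_uf (fun _ => P) <-> P.
Proof.
  split.
  - intros [n Hn]. exact (proj1 (uf_const (iter_uf_ultrafilter n) P) (Hn n (le_n n))).
  - intro HP. apply lim_uf_all. auto.
Qed.

Lemma lim_uf_disjoint {X Y} : lim_uf X -> lim_uf Y -> (forall s, X s -> Y s -> False) -> False.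
Proof.
  intros HX HY HXY. apply (proj1 (lim_uf_const False)).
  apply (lim_uf_mono (lim_uf_and HX HY)). intros s [HXs HYs]. exact (HXY s HXs HYs).
Qed.

Lemma lim_uf_iter {n X} : finitary n X -> (lim_uf X <-> iter_uf n X).
Proof.
  intro HX. split.
  - intros [n' Hn']. apply (iter_uf_finitary HX (Nat.le_max_l n n')). apply Hn'. lia.
  - intro Hn. exists n. intros m Hm. apply (iter_uf_finitary HX Hm), Hn.
Qed.

Lemma lim_uf_not {n X} : finitary n X -> (lim_uf (fun s => ~ X s) <-> ~ lim_uf X).
Proof.
  intro HX.
  assert (HnX : finitary n (fun s => ~ X s)).
  { intros s s' Hs. rewrite (HX s s' Hs). reflexivity. }
  rewrite (lim_uf_iter HX), (lim_uf_iter HnX).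
  apply (uf_not (iter_uf_ultrafilter n)).
Qed.

Lemma lim_uf_coordinate n (X : I -> (nat -> I) -> Prop) :
  (forall i, finitary n (X i)) -> D (fun i => lim_uf (X i)) ->
  lim_uf (fun s => X (s n) s).
Proof.
  intros HX HD.
  assert (Hfin : finitary (S n) (fun s => X (s n) s)).
  { intros s s' Hs. rewrite (Hs n) by lia. apply HX. exact (agree_le (le_S _ _ (le_n n)) Hs). }
  apply (proj2 (lim_uf_iter Hfin)). simpl.
  apply (uf_mono D_uf HD). intros i Hi. apply (lim_uf_iter (HX i)) in Hi.
  apply (uf_mono (iter_uf_ultrafilter n) Hi). intros s Hs.
  rewrite upd_eq. apply (HX i _ _ (agree_upd n n s i (le_n n))). exact Hs.
Qed.

End IteratedUltrafilter.

Arguments trunc {I} i0 n s.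
Arguments iter_uf {I} i0 D n X.
Arguments lim_uf {I} i0 D X.

Section LimitUltrapower.
Variables (F : nframe) (w0 : F) (D : (list (F -> Prop) -> Prop) -> Prop).
Hypothesis D_uf : is_ultrafilter (list (F -> Prop)) D.
Hypothesis D_fine : forall a, D (fun i => In a i).
Hypothesis HF : monotonic F.

Local Notation Seq := (nat -> list (F -> Prop)).
Local Notation lim := (lim_uf nil D).

(* [(n, g)] stands for [g] read on the first [n] coordinates only. *)
Definition internal (T : Type) : Type := (nat * (Seq -> T))%type.

Definition ieval {T : Type} (r : internal T) (s : Seq) : T := snd r (trunc nil (fst r) s).

Lemma ieval_agree {T : Type} (r : internal T) {n s s'} :
  fst r <= n -> agree n s s' -> ieval r s = ieval r s'.
Proof. intros Hr Hs. unfold ieval. rewrite (trunc_agree (agree_le Hr Hs)). reflexivity. Qed.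

Definition same (r r' : internal F) : Prop := lim (fun s => ieval r s = ieval r' s).

Definition canon (r : internal F) : internal F :=
  epsilon (inhabits (0, fun _ => w0)) (fun r' => same r' r).

Lemma canon_same r : same (canon r) r.
Proof. unfold canon. apply epsilon_spec. exists r. apply (lim_uf_all D_uf). reflexivity. Qed.

Lemma canon_ext r r' : same r r' -> canon r = canon r'.
Proof.
  intro Hrr'. unfold canon. f_equal.
  apply functional_extensionality. intro q. apply propositional_extensionality.
  split; intro Hq; apply (lim_uf_mono D_uf (lim_uf_and D_uf Hq Hrr'));
    intros s [E E']; congruence.
Qed.

(* Points of the limit ultrapower are canonical representatives of the
   [same]-classes, so that equality of points is Leibniz equality. *)
Definition point : Type := {r : internal F | canon r = r}.

Definition cls (r : internal F) : point :=
  exist _ (canon r) (canon_ext (canon r) r (canon_same r)).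

Definition ev (v : point) : Seq -> F := ieval (proj1_sig v).

Definition lev (v : point) : nat := fst (proj1_sig v).

Lemma ev_agree v {n s s'} : lev v <= n -> agree n s s' -> ev v s = ev v s'.
Proof. apply ieval_agree. Qed.

Lemma lim_ev_cls r (P : Seq -> F -> Prop) :
  lim (fun s => P s (ev (cls r) s)) <-> lim (fun s => P s (ieval r s)).
Proof.
  split; intro H; apply (lim_uf_mono D_uf (lim_uf_and D_uf H (canon_same r)));
    intros s [Hs E]; unfold ev in *; simpl in *; congruence.
Qed.

Lemma point_eq (v v' : point) : lim (fun s => ev v s = ev v' s) -> v = v'.
Proof.
  destruct v as [r Hr], v' as [r' Hr']. unfold ev. simpl. intro Hrr'.
  assert (E : r = r') by (rewrite <- Hr, <- Hr'; apply canon_ext, Hrr').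
  subst r'. f_equal. apply proof_irrelevance.
Qed.

Definition limit_nbhd (x : point) (X : point -> Prop) : Prop :=
  exists A : internal (F -> Prop),
    lim (fun s => nbhd F (ev x s) (ieval A s)) /\
    forall v, lim (fun s => ieval A s (ev v s)) -> X v.

Definition limit_frame : nframe := NFrame point limit_nbhd.

Lemma internal_choice n (P : Seq -> F -> Prop) :
  (forall w, finitary n (fun s => P s w)) ->
  lim (fun s => exists w, P s w) -> exists v : point, lim (fun s => P s (ev v s)).
Proof.
  intros HP Hex.
  exists (cls (n, fun s => epsilon (inhabits w0) (P s))).
  apply lim_ev_cls. apply (lim_uf_mono D_uf Hex). intros s [w Hw].
  assert (Htrunc : forall w, P (trunc nil n s) w <-> P s w) by (intro; apply HP, agree_trunc).
  unfold ieval. simpl. apply Htrunc, epsilon_spec. exists w. apply Htrunc, Hw.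
Qed.

Lemma internal_inclusion n (P R : Seq -> F -> Prop) :
  (forall w, finitary n (fun s => P s w)) ->
  (forall w, finitary n (fun s => R s w)) ->
  (forall v : point, lim (fun s => P s (ev v s)) -> lim (fun s => R s (ev v s))) ->
  lim (fun s => forall w, P s w -> R s w).
Proof.
  intros HP HR Hpoints.
  assert (Hfin : finitary n (fun s => forall w, P s w -> R s w)).
  { intros s s' Hs. split; intros H w.
    - rewrite <- (HP w s s' Hs), <- (HR w s s' Hs). apply H.
    - rewrite (HP w s s' Hs), (HR w s s' Hs). apply H. }
  apply NNPP. intro Hnot. apply (proj2 (lim_uf_not D_uf Hfin)) in Hnot.
  destruct (internal_choice n (fun s w => P s w /\ ~ R s w)) as [v Hv].
  - intros w s s' Hs. rewrite (HP w s s' Hs), (HR w s s' Hs). reflexivity.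
  - apply (lim_uf_mono D_uf Hnot). intros s Hs.
    apply not_all_ex_not in Hs. destruct Hs as [w Hw]. exists w. tauto.
  - assert (HRv := Hpoints v (lim_uf_mono D_uf Hv (fun s => @proj1 _ _))).
    apply (lim_uf_disjoint D_uf Hv HRv). tauto.
Qed.

Definition val (rho : nat -> point) (s : Seq) : nat -> F := fun z => ev (rho z) s.

Lemma val_upd rho y v s : val (upd rho y v) s = upd (val rho s) y (ev v s).
Proof.
  apply functional_extensionality. intro z. unfold val, upd.
  destruct (Nat.eqb z y); reflexivity.
Qed.

Lemma val_finitary n phi rho :
  (forall z, free_in z phi -> lev (rho z) <= n) ->
  finitary n (fun s => sat F (val rho s) phi).
Proof.
  intros Hlev s s' Hs. apply sat_ext. intros z Hz. exact (ev_agree (rho z) (Hlev z Hz) Hs).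
Qed.

Lemma body_finitary n y p rho w :
  (forall z, free_in z p -> z <> y -> lev (rho z) <= n) ->
  finitary n (fun s => sat F (upd (val rho s) y w) p).
Proof.
  intros Hlev s s' Hs. apply sat_ext. intros z Hz. unfold upd.
  destruct (Nat.eqb_spec z y) as [_|Hzy]; [reflexivity|].
  exact (ev_agree (rho z) (Hlev z Hz Hzy) Hs).
Qed.

Lemma limit_nbhd_lim n x (P : Seq -> F -> Prop) :
  (forall w, finitary n (fun s => P s w)) ->
  limit_nbhd x (fun v => lim (fun s => P s (ev v s))) <->
  lim (fun s => nbhd F (ev x s) (P s)).
Proof.
  intro HP. split.
  - intros [A [HA Hsub]].
    assert (Hincl : lim (fun s => forall w, ieval A s w -> P s w)).
    { apply (internal_inclusion (max n (fst A))); [| |exact Hsub].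
      - intros w s s' Hs. rewrite (ieval_agree A (Nat.le_max_r n (fst A)) Hs). reflexivity.
      - intro w. exact (finitary_le (Nat.le_max_l n (fst A)) (HP w)). }
    apply (lim_uf_mono D_uf (lim_uf_and D_uf HA Hincl)).
    intros s [Hs Hsub_s]. exact (HF _ _ _ Hs Hsub_s).
  - intro H.
    assert (Htrunc : forall s w, ieval (n, P) s w <-> P s w)
      by (intros s w; apply HP, agree_trunc).
    exists (n, P). split.
    + apply (lim_uf_mono D_uf H). intros s Hs. apply (HF _ _ _ Hs). apply Htrunc.
    + intros v Hv. apply (lim_uf_mono D_uf Hv). intro s. apply Htrunc.
Qed.

Theorem los phi : forall rho : nat -> point,
  sat limit_frame rho phi <-> lim (fun s => sat F (val rho s) phi).
Proof.
  induction phi as [x y | p IH | p IHp q IHq | y p IH | x y p IH]; intro rho.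
  - simpl. split.
    + intro E. apply (lim_uf_all D_uf). intro s. unfold val. rewrite E. reflexivity.
    + apply point_eq.
  - destruct (free_vars_bounded (fun z => lev (rho z)) p) as [n Hn].
    simpl. rewrite IH. symmetry. exact (lim_uf_not D_uf (val_finitary n p rho Hn)).
  - simpl. rewrite IHp, IHq. split.
    + intros [Hp Hq]. exact (lim_uf_and D_uf Hp Hq).
    + intro H. split; apply (lim_uf_mono D_uf H); tauto.
  - destruct (free_vars_bounded (fun z => lev (rho z)) (fEx y p)) as [n Hn].
    assert (Hbody : forall w, finitary n (fun s => sat F (upd (val rho s) y w) p)).
    { intro w. apply body_finitary. intros z Hz Hzy. apply Hn. simpl. auto. }
    simpl. split.
    + intros [v Hv]. apply IH in Hv. apply (lim_uf_mono D_uf Hv). intros s Hs.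
      exists (ev v s). rewrite <- val_upd. exact Hs.
    + intro H. destruct (internal_choice n _ Hbody H) as [v Hv]. exists v.
      apply IH. apply (lim_uf_mono D_uf Hv). intros s Hs. rewrite val_upd. exact Hs.
  - destruct (free_vars_bounded (fun z => lev (rho z)) (fBox x y p)) as [n Hn].
    simpl.
    replace (fun v => sat limit_frame (upd rho y v) p)
      with (fun v => lim (fun s => sat F (upd (val rho s) y (ev v s)) p)).
    + apply (limit_nbhd_lim n (rho x) (fun s w => sat F (upd (val rho s) y w) p)).
      intro w. apply body_finitary. intros z Hz Hzy. apply Hn. simpl. auto.
    + apply functional_extensionality. intro v. apply propositional_extensionality.
      rewrite IH. split; intro H; apply (lim_uf_mono D_uf H); intros s Hs;
        rewrite val_upd in *; exact Hs.
Qed.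

Lemma limit_frame_same_theory : same_theory limit_frame F.
Proof.
  intros phi Hphi. split.
  - intros HG rho. pose (rho0 := fun _ : nat => cls (0, fun _ => w0)).
    apply (proj1 (lim_uf_const (i0 := nil) D_uf (sat F rho phi))).
    apply (lim_uf_mono D_uf (proj1 (los phi rho0) (HG rho0))).
    intro s. apply sentence_sat, Hphi.
  - intros HFphi rho. apply los, (lim_uf_all D_uf). intro s. apply HFphi.
Qed.

Lemma point_type_ultrafilter v : is_ultrafilter F (fun a => lim (fun s => a (ev v s))).
Proof.
  split; [|split; [|split; [|split]]].
  - exact (proj1 (lim_uf_const D_uf False)).
  - apply (lim_uf_all D_uf). auto.
  - intros X Y HX HXY. apply (lim_uf_mono D_uf HX). auto.
  - intros X Y. apply (lim_uf_and D_uf).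
  - intro X. destruct (classic (lim (fun s => X (ev v s)))) as [H|H]; [left; exact H|right].
    apply (lim_uf_not D_uf (n := lev v)); [|exact H].
    intros s s' Hs. rewrite (ev_agree v (le_n _) Hs). reflexivity.
Qed.

Definition point_type (v : point) : ultrafilter F := exist _ _ (point_type_ultrafilter v).

Definition compatible (A : internal (F -> Prop)) (u : ultrafilter F) : Prop :=
  forall b, lim (fun s => forall t, ieval A s t -> b t) -> proj1_sig u b.

Lemma point_type_compatible A v :
  lim (fun s => ieval A s (ev v s)) -> compatible A (point_type v).
Proof.
  intros HA b Hb. apply (lim_uf_mono D_uf (lim_uf_and D_uf HA Hb)).
  intros s [HAs Hbs]. exact (Hbs _ HAs).
Qed.

Lemma lim_coordinate_mem n a : lim (fun s => In a (s n)).
Proof.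
  apply (lim_uf_coordinate D_uf n (fun i _ => In a i)).
  - intros i s s' _. reflexivity.
  - apply (uf_mono D_uf (D_fine a)). intros i Hi. apply lim_uf_const; auto.
Qed.

(* The point is chosen at [s] in [ieval A s] and in every member of [u] listed
   by the fresh coordinate [s (fst A)]; as [D] is fine, each member of [u] is
   almost surely listed there. *)
Lemma realize A u :
  compatible A u -> exists v, point_type v = u /\ lim (fun s => ieval A s (ev v s)).
Proof.
  intro Hu. set (N := fst A).
  set (B := fun (i : list (F -> Prop)) t => forall a, In a i -> proj1_sig u a -> a t).
  assert (HA : forall m t, N <= m -> finitary m (fun s => ieval A s t)).
  { intros m t Hm s s' Hs. rewrite (ieval_agree A Hm Hs). reflexivity. }
  assert (Hmeet : forall i, lim (fun s => exists t, ieval A s t /\ B i t)).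
  { intro i. apply NNPP. intro Hnot.
    assert (Hfin : finitary N (fun s => exists t, ieval A s t /\ B i t)).
    { intros s s' Hs. setoid_rewrite (HA N _ (le_n N) s s' Hs). reflexivity. }
    apply (proj2 (lim_uf_not D_uf Hfin)) in Hnot.
    assert (HnB : proj1_sig u (fun t => ~ B i t)).
    { apply Hu. apply (lim_uf_mono D_uf Hnot). intros s Hs t Ht HBt. eauto. }
    apply (proj1 (uf_not (proj2_sig u) _) HnB).
    exact (uf_meet_list (proj2_sig u) _ i (fun a _ Ha => Ha)). }
  destruct (internal_choice (S N) (fun s t => ieval A s t /\ B (s N) t)) as [v Hv].
  - intros t s s' Hs. rewrite (Hs N), (HA (S N) t (le_S _ _ (le_n N)) s s' Hs) by lia.
    reflexivity.
  - apply (lim_uf_coordinate D_uf N (fun i s => exists t, ieval A s t /\ B i t)).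
    + intros i s s' Hs. setoid_rewrite (HA N _ (le_n N) s s' Hs). reflexivity.
    + apply (uf_mono D_uf (uf_true D_uf)). intros i _. apply Hmeet.
  - exists v. split.
    + symmetry. apply ultrafilter_eq. intros a Ha.
      apply (lim_uf_mono D_uf (lim_uf_and D_uf Hv (lim_coordinate_mem N a))).
      intros s [[_ HB] Hin]. exact (HB a Hin Ha).
    + apply (lim_uf_mono D_uf Hv). tauto.
Qed.

Lemma point_type_surjective : surjective point_type.
Proof.
  intro u.
  assert (Hall : compatible (0, fun _ _ => True) u).
  { intros b Hb. change (lim (fun _ => forall t, True -> b t)) in Hb.
    apply (proj1 (lim_uf_const (i0 := nil) D_uf _)) in Hb.
    apply (uf_mono (proj2_sig u) (uf_true (proj2_sig u))). auto. }
  destruct (realize _ u Hall) as [v [Hv _]]. exists v. exact Hv.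
Qed.

Lemma point_type_forth w U' :
  limit_nbhd w (fun v => U' (point_type v)) -> nbhd (ue F) (point_type w) U'.
Proof.
  intros [A [HA Hsub]]. exists (compatible A). split; [|split].
  - exists (fun b => lim (fun s => forall t, ieval A s t -> b t)). reflexivity.
  - intros u Hu. destruct (realize A u Hu) as [v [<- Hv]]. exact (Hsub v Hv).
  - intros a Ha.
    assert (Hincl : lim (fun s => forall t, ieval A s t -> a t)).
    { apply (internal_inclusion (fst A)).
      - intros t s s' Hs. rewrite (ieval_agree A (le_n _) Hs). reflexivity.
      - intros t s s' _. reflexivity.
      - intros v Hv. exact (Ha (point_type v) (point_type_compatible A v Hv)). }
    apply (lim_uf_mono D_uf (lim_uf_and D_uf HA Hincl)).
    intros s [Hs Hincl_s]. exact (HF _ _ _ Hs Hincl_s).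
Qed.

Lemma point_type_back w U' :
  nbhd (ue F) (point_type w) U' -> limit_nbhd w (fun v => U' (point_type v)).
Proof.
  intros [K [[S0 HK] [HKU Hbox]]]. set (n := lev w).
  (* The internal set is the meet of the supersets of [K] listed by the fresh
     coordinate [s n]. *)
  set (B := fun (i : list (F -> Prop)) t =>
              forall a, In a i -> (forall u, K u -> proj1_sig u a) -> a t).
  assert (HA : forall s, ieval (S n, fun s => B (s n)) s = B (s n)).
  { intro s. unfold ieval. simpl. rewrite (agree_trunc (S n) s n) by lia. reflexivity. }
  exists (S n, fun s => B (s n)). split.
  - apply (lim_uf_mono D_uf (X := fun s => nbhd F (ev w s) (B (s n)))).
    + apply (lim_uf_coordinate D_uf n (fun i s => nbhd F (ev w s) (B i))).
      * intros i s s' Hs. rewrite (ev_agree w (le_n n) Hs). reflexivity.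
      * apply (uf_mono D_uf (uf_true D_uf)). intros i _. apply Hbox.
        intros u Ku. apply (uf_meet_list (proj2_sig u)). intros a _ Ha. exact (Ha u Ku).
    + intros s Hs. rewrite HA. exact Hs.
  - intros v Hv. apply HKU, HK. intros a Ha.
    assert (HaK : forall u, K u -> proj1_sig u a) by (intros u Ku; exact (proj1 (HK u) Ku a Ha)).
    apply (lim_uf_mono D_uf (lim_uf_and D_uf Hv (lim_coordinate_mem n a))).
    intros s [HB Hin]. rewrite HA in HB. exact (HB a Hin HaK).
Qed.

Lemma point_type_bounded_morphism : bounded_morphism limit_frame (ue F) point_type.
Proof. intros w U'. split; [apply point_type_forth | apply point_type_back]. Qed.

Lemma limit_frame_monotonic : monotonic limit_frame.
Proof. intros x X Y [A [HA Hsub]] HXY. exists A. split; auto. Qed.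

Lemma limit_frame_quasi_filter : quasi_filter F -> quasi_filter limit_frame.
Proof.
  intros [_ HFI]. split; [exact limit_frame_monotonic|].
  intros x X Y [A1 [HA1 Hsub1]] [A2 [HA2 Hsub2]].
  set (m := max (fst A1) (fst A2)).
  set (A := (m, fun s t => ieval A1 s t /\ ieval A2 s t)).
  assert (HA : forall s, ieval A s = fun t => ieval A1 s t /\ ieval A2 s t).
  { intro s. unfold ieval at 1. simpl.
    rewrite (ieval_agree A1 (Nat.le_max_l _ _) (agree_trunc m s)),
            (ieval_agree A2 (Nat.le_max_r _ _) (agree_trunc m s)).
    reflexivity. }
  exists A. split.
  - apply (lim_uf_mono D_uf (lim_uf_and D_uf HA1 HA2)). intros s [H1 H2].
    rewrite HA. exact (HFI _ _ _ H1 H2).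
  - intros v Hv. split; [apply Hsub1 | apply Hsub2]; apply (lim_uf_mono D_uf Hv);
      intros s Hs; rewrite HA in Hs; apply Hs.
Qed.

Lemma limit_frame_conclusion : lemma4p4_conclusion F limit_frame.
Proof.
  split; [exact limit_frame_same_theory|].
  exists point_type. split; [exact point_type_surjective | exact point_type_bounded_morphism].
Qed.

End LimitUltrapower.

Lemma empty_frame_conclusion (F : nframe) : ~ inhabited F -> lemma4p4_conclusion F F.
Proof.
  intro Hempty. split; [intros phi _; reflexivity|].
  assert (Hno_uf : ultrafilter F -> False).
  { intros [u Hu]. destruct (uf_nonempty Hu _ (uf_true Hu)) as [t _].
    exact (Hempty (inhabits t)). }
  exists (fun w => False_rect _ (Hempty (inhabits w))). split.
  - intro u. destruct (Hno_uf u).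
  - intro w. destruct (Hempty (inhabits w)).
Qed.

Theorem lemma4p4 (F : nframe) (HF : monotonic F) :
  (exists G : nframe, lemma4p4_conclusion F G /\ monotonic G) /\
  (quasi_filter F -> exists G : nframe, lemma4p4_conclusion F G /\ quasi_filter G).
Proof.
  destruct (classic (inhabited F)) as [[w0]|Hempty].
  - destruct (fine_ultrafilter_exists (F -> Prop)) as [D [D_uf D_fine]].
    pose proof (limit_frame_conclusion F w0 D D_uf D_fine HF) as C.
    split; [|intro HQ]; exists (limit_frame F w0 D); split; try exact C.
    + apply limit_frame_monotonic.
    + exact (limit_frame_quasi_filter F w0 D D_uf HQ).
  - pose proof (empty_frame_conclusion F Hempty) as C.
    split; [|intro HQ]; exists F; split; assumption.
Qed.
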